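(* Every finite nonempty set $A\subseteq S'(n,l)$ has a minimal set of generators; that is, there is a set of generators $G_0$ of $A$ such that $G_0\subseteq G$ for every set of generators $G$ of $A$ (equivalently, the intersection of all sets of generators of $A$ is itself a set of generators of $A$).
   Context: $\mathbb N_n=\{1,\dots,n\}$. $F_n$ denotes the set of functions $f:\mathbb N_n\to[0,1]$ with $\sum_{i=1}^n f(i)=1$. A generalized string of length $l$ over $\mathbb N_n$ is a function $s:\mathbb N_l\to F_n$; the set of these is $S'(n,l)$, and the value of $s$ at $i$ is written $s[i]$. The generalized Hamming distance is $d_{GH}(s,t)=\sum_{i=1}^l\big(1-\sum_{j=1}^n\min\{s[i](j),t[i](j)\}\big)$. For a finite nonempty $\sigma\subseteq S'(n,l)$, its radius is $r(\sigma)=\min\{r\ge0:\exists x\in S'(n,l)\,\forall y\in\sigma\ d_{GH}(x,y)\le r\}$ (this minimum exists), and a center of $\sigma$ is any $c\in S'(n,l)$ with $d_{GH}(c,y)\le r(\sigma)$ for all $y\in\sigma$. For $x\in S'(n,l)$, $r\ge0$: $B(x,r)=\{y:d_{GH}(x,y)\le r\}$, ${\rm int}B(x,r)=\{y:d_{GH}(x,y)<r\}$, ${\rm bd}B(x,r)=\{y:d_{GH}(x,y)=r\}$. $MB(\sigma)=\{B(c,r(\sigma)):c\text{ is a center of }\sigma\}$. For a finite nonempty $A\subseteq S'(n,l)$, a set $G\subseteq A$ is a set of generators of $A$ if there is $B\in MB(A)$ with $G\subseteq{\rm bd}B$ and $A\setminus G\subseteq{\rm int}B$. *)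

From HB Require Import structures.
From mathcomp Require Import all_boot all_order all_algebra.
From mathcomp Require Import boolp classical_sets cardinality reals.
Set Implicit Arguments. Unset Strict Implicit. Unset Printing Implicit Defensive.
Import Order.TTheory GRing.Theory Num.Theory.
Local Open Scope ring_scope.
Local Open Scope classical_set_scope.

Section GenStrings.
Variable R : realType.

(* A raw generalized string of length l over N_n: s i j = s[i+1](j+1). *)
Definition gstr (n l : nat) := {ffun 'I_l -> {ffun 'I_n -> R}}.

Definition in_F (n : nat) (f : {ffun 'I_n -> R}) : Prop :=
  (forall j, 0 <= f j <= 1) /\ \sum_(j < n) f j = 1.

Definition in_S (n l : nat) (s : gstr n l) : Prop := forall i, in_F (s i).

Definition dGH (n l : nat) (s t : gstr n l) : R :=
  \sum_(i < l) (1 - \sum_(j < n) Num.min (s i j) (t i j)).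

Definition covers (n l : nat) (sigma : set (gstr n l)) (x : gstr n l) (r : R) :=
  in_S x /\ forall y, sigma y -> dGH x y <= r.

Definition is_radius (n l : nat) (sigma : set (gstr n l)) (r : R) : Prop :=
  0 <= r /\ (exists x, covers sigma x r) /\
  (forall r', 0 <= r' -> (exists x, covers sigma x r') -> r <= r').

(* G is a set of generators of A: there is a ball B(c, r(A)) in MB(A)
   (c a center of A) with G in its boundary and A \ G in its interior. *)
Definition generators (n l : nat) (A G : set (gstr n l)) : Prop :=
  G `<=` A /\
  exists r c, is_radius A r /\ covers A c r /\
    (forall y, G y -> dGH c y = r) /\
    (forall y, (A `\` G) y -> dGH c y < r).

End GenStrings.

From mathcomp Require Import all_boot all_order all_algebra.
From mathcomp Require Import boolp classical_sets cardinality reals.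
From mathcomp Require Import finmap.
From mathcomp Require Import topology normedtype derive.
From mathcomp Require Import lra.
Set Implicit Arguments. Unset Strict Implicit. Unset Printing Implicit Defensive.
Import Order.TTheory GRing.Theory Num.Theory.
Import ArrowAsProduct numFieldNormedType.Exports.
Local Open Scope ring_scope.
Local Open Scope classical_set_scope.

(* The radius r(A) exists because the maximal distance to A is a continuous
   function on the compact set S'(n,l) and attains its minimum.  For a fixed
   radius, generator sets are exactly the sets [A ∩ bd B(c, r(A))] for centers c.
   Since dGH is convex in its first argument, the midpoint of two centers is
   again a center whose generator set lies in the intersection of theirs; so the
   generator sets form a downward directed family of subsets of the finite set A,
   and such a family has a least member. *)

Section DirectedFamily.
Variables (T : choiceType) (A : set T) (F : set (set T)).
Hypotheses (finA : finite_set A) (F_subA : forall G, F G -> G `<=` A).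
Hypothesis F_directed :
  forall G1 G2, F G1 -> F G2 -> exists2 G, F G & G `<=` G1 `&` G2.

Lemma directed_family_least : F !=set0 ->
  exists2 G0, F G0 & forall G, F G -> G0 `<=` G.
Proof.
move=> [G FG].
have finF G' : F G' -> finite_set G' by move=> /F_subA /sub_finite_set; exact.
pose has_card k := `[< exists2 G', F G' & #|` fset_set G'|%fset = k >].
have has_card_ex : exists k, has_card k.
  by exists #|` fset_set G|%fset; apply/asboolP; exists G.
case: (ex_minnP has_card_ex) => k /asboolP[G0 FG0 cardG0] k_min.
exists G0 => // G1 FG1.
have [G' FG' sub'] := F_directed FG0 FG1.
have sub'0 : (fset_set G' `<=` fset_set G0)%fset.
  by rewrite -fset_set_sub; [move=> y /sub' [] | exact: finF | exact: finF].
have G'_G0 : G' = G0.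
  apply: fset_set_inj; [exact: finF | exact: finF | apply/eqP].
  rewrite -(fsubset_leqif_cards sub'0).2 eqn_leq (fsubset_leqif_cards sub'0).1 cardG0.
  by apply: k_min; apply/asboolP; exists G'.
by rewrite -G'_G0 => y /sub' [].
Qed.

End DirectedFamily.

Section RadiusExistence.
Variables (R : realType) (n l : nat).
Local Notation coord := ('I_l * 'I_n -> R).

(* Strings are handled through their coordinates in the product space
   [R^('I_l * 'I_n)], whose topology is the product topology. *)
Definition gstr_of (f : coord) : gstr R n l := [ffun i => [ffun j => f (i, j)]].
Definition coords (x : gstr R n l) : coord := fun p => x p.1 p.2.

Lemma coordsK : cancel coords gstr_of.
Proof. by move=> x; apply/ffunP => i; apply/ffunP => j; rewrite !ffunE. Qed.

Definition stochastic : set coord :=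
  [set f | (forall p, 0 <= f p <= 1) /\ (forall i, \sum_(j < n) f (i, j) = 1)].

Lemma in_S_gstr_of f : in_S (gstr_of f) <-> stochastic f.
Proof.
split=> [fS|[f01 f_sum] i]; last first.
  split=> [j|]; first by rewrite !ffunE.
  by rewrite ffunE; under eq_bigr do rewrite ffunE.
split=> [[i j]|i]; first by have [/(_ j) + _] := fS i; rewrite !ffunE.
by have [_] := fS i; under eq_bigr do rewrite !ffunE.
Qed.

Lemma coord_continuous p : continuous (fun f : coord => f p).
Proof. exact: (@proj_continuous _ (fun _ => R) p). Qed.

Lemma stochastic_closed : closed stochastic.
Proof.
have -> : stochastic =
    \bigcap_(p in setT) ((fun f : coord => f p) @^-1` `[0, 1]) `&`
    \bigcap_(i in setT) ((fun f : coord => \sum_(j < n) f (i, j)) @^-1` [set 1]).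
  apply/seteqP; split=> f /=.
    by move=> [f01 f_sum]; split=> p _ /=; rewrite ?in_itv ?f01 ?f_sum.
  move=> [f01 f_sum]; split=> [p|i]; last exact: f_sum.
  by have := f01 p I; rewrite /= in_itv.
apply: closedI; apply: closed_bigI => p _; apply: closed_comp.
- by move=> f _; exact: coord_continuous.
- exact: interval_closed.
- move=> f _; apply: continuous_big => // [|j _]; first exact: add_continuous.
  exact: coord_continuous.
- exact: closed_eq.
Qed.

Lemma stochastic_compact : compact stochastic.
Proof.
apply: subclosed_compact stochastic_closed
  (tychonoff (fun _ : 'I_l * 'I_n => @segment_compact R 0 1)) _.
by move=> f [f01 _] p /=; rewrite in_itv /= f01.
Qed.

Lemma gstr_of_continuous i j : continuous (fun f : coord => gstr_of f i j).
Proof.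
have -> : (fun f : coord => gstr_of f i j) = fun f => f (i, j).
  by apply: funext => f; rewrite !ffunE.
exact: coord_continuous.
Qed.

Lemma dGH_gstr_of_continuous y : continuous (fun f : coord => dGH (gstr_of f) y).
Proof.
have addc : continuous (fun z : R * R => z.1 + z.2) := add_continuous.
apply: (continuous_big addc) => i _.
have sumc : continuous (fun f : coord => \sum_(j < n) Num.min (gstr_of f i j) (y i j)).
  apply: (continuous_big addc) => j _ g.
  exact: (min_fun_continuous (@gstr_of_continuous i j) (@cst_continuous _ R (y i j))).
move=> f; exact: (@cvgB _ R^o _ _ _ (fun=> 1) _ _ _ (cvg_cst _) (sumc f)).
Qed.

Lemma radius_exists (A : set (gstr R n l)) :
  finite_set A -> A !=set0 -> (forall y, A y -> in_S y) ->
  exists r c, is_radius A r /\ covers A c r.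
Proof.
move=> /finite_fsetP[B ->] [y0 By0] BS.
pose far f := \big[Num.max/0]_(y <- B) dGH (gstr_of f) y.
have far_cont : continuous far.
  apply: (continuous_big max_continuous) => y _.
  exact: dGH_gstr_of_continuous.
have stoch0 : stochastic !=set0.
  by exists (coords y0); apply/in_S_gstr_of; rewrite coordsK; exact: BS.
have [c /set_mem c_stoch c_min] :=
  compact_EVT_min stoch0 stochastic_compact (continuous_subspaceT far_cont).
have far_min x r : covers [set` B] x r -> 0 <= r -> far c <= r.
  move=> [xS x_le] r0; apply: le_trans (c_min (coords x) _) _.
    by apply/mem_set/in_S_gstr_of; rewrite coordsK.
  by rewrite /far coordsK big_seq; apply: bigmax_le => // y; exact: x_le.
have c_covers : covers [set` B] (gstr_of c) (far c).
  split=> [|y yB]; first exact/in_S_gstr_of.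
  exact: (le_bigmax_seq _ _ xpredT).
exists (far c), (gstr_of c); split=> //; split; first exact: bigmax_ge_id.
by split=> [|r r0 [x x_covers]]; [exists (gstr_of c) | exact: far_min x_covers r0].
Qed.

End RadiusExistence.

Lemma minr_midpoint (R : realFieldType) (a b t : R) :
  Num.min a t + Num.min b t <= 2 * Num.min ((a + b) / 2) t.
Proof.
have [at_a at_t] : Num.min a t <= a /\ Num.min a t <= t by rewrite !ge_min !lexx ?orbT.
have [bt_b bt_t] : Num.min b t <= b /\ Num.min b t <= t by rewrite !ge_min !lexx ?orbT.
suff : (Num.min a t + Num.min b t) / 2 <= Num.min ((a + b) / 2) t by lra.
by rewrite le_min; apply/andP; split; lra.
Qed.

Section Centers.
Variables (R : realType) (n l : nat) (A : set (gstr R n l)).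

Lemma is_radius_unique r1 r2 : is_radius A r1 -> is_radius A r2 -> r1 = r2.
Proof.
move=> [r1_ge0 [cov1 min1]] [r2_ge0 [cov2 min2]].
by apply/le_anti/andP; split; [exact: min1 r2_ge0 cov2 | exact: min2 r1_ge0 cov1].
Qed.

Definition farthest (c : gstr R n l) (r : R) : set (gstr R n l) :=
  [set y | A y /\ dGH c y = r].

Lemma farthest_generators r c :
  is_radius A r -> covers A c r -> generators A (farthest c r).
Proof.
move=> radA [cS c_le]; split=> [y [] //|].
exists r, c; do 3 split => //; first by move=> y [].
move=> y [Ay not_far]; rewrite lt_neqAle c_le // andbT.
by apply/eqP => far_y; apply: not_far.
Qed.

Lemma generatorsP r G : is_radius A r -> generators A G ->
  exists2 c, covers A c r & G = farthest c r.
Proof.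
move=> radA [GA [r' [c [radA' [cov [G_far nG_near]]]]]].
rewrite -(is_radius_unique radA' radA).
exists c => //; apply/seteqP; split=> [y Gy|y [Ay far_y]].
  by split; [exact: GA | exact: G_far].
apply: contrapT => nGy.
by have := nG_near y (conj Ay nGy); rewrite far_y ltxx.
Qed.

Definition midpoint (c1 c2 : gstr R n l) : gstr R n l :=
  [ffun i => [ffun j => (c1 i j + c2 i j) / 2]].

Lemma in_S_midpoint c1 c2 : in_S c1 -> in_S c2 -> in_S (midpoint c1 c2).
Proof.
move=> c1S c2S i; have [c1_01 c1_sum] := c1S i; have [c2_01 c2_sum] := c2S i.
split=> [j|]; rewrite !ffunE.
  by have /andP[? ?] := c1_01 j; have /andP[? ?] := c2_01 j; apply/andP; split; lra.
under eq_bigr do rewrite ffunE.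
by rewrite -mulr_suml big_split /= c1_sum c2_sum; lra.
Qed.

Lemma dGH_midpoint c1 c2 y : 2 * dGH (midpoint c1 c2) y <= dGH c1 y + dGH c2 y.
Proof.
rewrite /dGH mulr_sumr -big_split /=; apply: ler_sum => i _.
suff : \sum_(j < n) Num.min (c1 i j) (y i j) + \sum_(j < n) Num.min (c2 i j) (y i j)
    <= 2 * \sum_(j < n) Num.min (midpoint c1 c2 i j) (y i j) by lra.
rewrite -big_split mulr_sumr /=; apply: ler_sum => j _; rewrite !ffunE.
exact: minr_midpoint.
Qed.

Lemma covers_midpoint r c1 c2 : covers A c1 r -> covers A c2 r ->
  covers A (midpoint c1 c2) r /\
  farthest (midpoint c1 c2) r `<=` farthest c1 r `&` farthest c2 r.
Proof.
move=> [c1S c1_le] [c2S c2_le]; split.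
  split=> [|y Ay]; first exact: in_S_midpoint.
  by have := dGH_midpoint c1 c2 y; have := c1_le y Ay; have := c2_le y Ay; lra.
move=> y [Ay far_y]; have := dGH_midpoint c1 c2 y.
have := c1_le y Ay; have := c2_le y Ay; rewrite far_y => le2 le1 mid_le.
by split; split=> //; lra.
Qed.

End Centers.

Theorem mainTheorem3 (R : realType) (n l : nat) (A : set (gstr R n l)) :
  finite_set A -> A !=set0 -> (forall y, A y -> in_S y) ->
  exists G0, generators A G0 /\ forall G, generators A G -> G0 `<=` G.
Proof.
move=> finA A0 AS.
have [r [c [radA covc]]] := radius_exists finA A0 AS.
have [G0 genG0 G0_least] :
    exists2 G0, generators A G0 & forall G, generators A G -> G0 `<=` G.
  apply: directed_family_least finA _ _ _.
  - by move=> G [].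
  - move=> G1 G2 /(generatorsP radA)[c1 cov1 ->] /(generatorsP radA)[c2 cov2 ->].
    have [covm subm] := covers_midpoint cov1 cov2.
    by exists (farthest A (midpoint c1 c2) r); first exact: farthest_generators.
  - by exists (farthest A c r); exact: farthest_generators.
by exists G0.
Qed.
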